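(* Let $G$ be a finite group and let $p,q$ be distinct primes dividing $|G|$. Let $m,n$ be positive integers and suppose that $|G| = p^i q^n$ for some integer $i$ with $1 \le i \le m$. If $p \nmid q^n - 1$ and $q \nmid p^j - 1$ for every $j$ with $1 \le j \le m$, then $G$ has an abelian subgroup of order $pq$. *)

From mathcomp Require Import all_boot all_fingroup all_solvable.

From mathcomp Require Import all_boot all_fingroup all_solvable.

(* The divisibility conditions force, via the Sylow congruence, a normal Sylow
   q-subgroup Q of G.  An element x of order p acts on Q by conjugation, and
   since p does not divide |Q| - 1 = q^n - 1 this action has a nontrivial fixed
   point y, which we may take of order q; then x * y has order pq. *)

Set Implicit Arguments.
Unset Strict Implicit.
Unset Printing Implicit Defensive.

Section PQGroups.

Variable gT : finGroupType.
Implicit Types G A Q : {group gT}.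

Lemma card_Syl_pfactor_eq1 G p q i k :
    prime p -> prime q -> #|G| = p ^ i * q ^ k ->
    (forall j, 1 <= j <= i -> ~~ (q %| p ^ j - 1)) ->
  #|'Syl_q(G)%g| = 1.
Proof.
move=> p_pr q_pr oG q_ndvd; set c := #|'Syl_q(G)%g|.
have c_mod_q : c %% q = 1 := card_Syl_mod G q_pr.
have c_coprime : coprime c (q ^ k).
  by rewrite coprimeXr // coprime_sym prime_coprime // /dvdn c_mod_q.
have : c %| p ^ i * q ^ k by rewrite -oG card_Syl_dvd.
rewrite Gauss_dvdl // => /(dvdn_pfactor _ _ p_pr)[[|j] le_j_i c_def];
  rewrite c_def ?expn0 // in c_mod_q *.
have := q_ndvd j.+1 le_j_i.
by rewrite -eqn_mod_dvd ?expn_gt0 ?prime_gt0 // c_mod_q modn_small ?prime_gt1.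
Qed.

Lemma card_Sylow_pfactor G Q p q i k :
    prime p -> prime q -> p != q -> #|G| = p ^ i * q ^ k ->
    (q.-Sylow(G) Q)%g ->
  #|Q| = q ^ k.
Proof.
move=> p_pr q_pr neq_pq oG sylQ.
rewrite (card_Hall sylQ) oG partnM ?expn_gt0 ?prime_gt0 //.
rewrite part_p'nat ?pnatX ?pnatE ?inE ?neq_pq // mul1n.
by rewrite part_pnat_id // pnatX pnat_id.
Qed.

Lemma pgroup_cent_nontrivial A Q (p : nat) :
  (p.-group A -> A \subset 'N(Q) -> ~~ (p %| #|Q| - 1) -> Q :&: 'C(A) != 1)%g.
Proof.
move=> pA nQA; apply: contra => /eqP CQA1.
have actsJ : [acts A, on Q | 'J]%g by rewrite astabsJ.
have := pgroup_fix_mod pA actsJ; rewrite afixJ CQA1 cards1.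
by move/eqP; rewrite eqn_mod_dvd.
Qed.

End PQGroups.

Theorem theorem2p9 (gT : finGroupType) (G : {group gT}) (p q m n i : nat) :
  prime p -> prime q -> p != q -> p %| #|G| -> q %| #|G| ->
  0 < m -> 0 < n -> 1 <= i <= m ->
  #|G| = p ^ i * q ^ n ->
  ~~ (p %| q ^ n - 1) ->
  (forall j, 1 <= j <= m -> ~~ (q %| p ^ j - 1)) ->
  exists H : {group gT}, [/\ H \subset G, abelian H & #|H| = p * q].
Proof.
move=> p_pr q_pr neq_pq pG _ _ _ /andP[_ le_i_m] oG p_ndvd q_ndvd.
have /eqP/normal_sylowP[Q sylQ nsQG] : #|'Syl_q(G)%g| = 1.
  apply: card_Syl_pfactor_eq1 p_pr q_pr oG _ => j /andP[j_gt0 le_j_i].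
  by apply: q_ndvd; rewrite j_gt0 (leq_trans le_j_i).
have [x Gx ox] := Cauchy p_pr pG.
have pX : (p.-group <[x]>)%g by rewrite /pgroup -orderE ox pnat_id.
have nQX : (<[x]> \subset 'N(Q))%g.
  by rewrite cycle_subG (subsetP (normal_norm nsQG)).
have ntK : (Q :&: 'C(<[x]>) != 1)%g.
  apply: pgroup_cent_nontrivial pX nQX _.
  by rewrite (card_Sylow_pfactor p_pr q_pr neq_pq oG sylQ).
have qK : (q.-group (Q :&: 'C(<[x]>)))%g.
  exact: pgroupS (subsetIl _ _) (pHall_pgroup sylQ).
have [_ q_dvd_K _] := pgroup_pdiv qK ntK.
have [y /setIP[Qy cxy] oy] := Cauchy q_pr q_dvd_K.
have{cxy} cxy : commute x y.
  by apply/commute_sym/cent1P; rewrite -cent_cycle.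
have Gy : y \in G := subsetP (pHall_sub sylQ) y Qy.
exists <[x * y]>%G; split; first by rewrite cycle_subG groupM.
  exact: cycle_abelian.
by rewrite -orderE orderM ?ox ?oy // prime_coprime // dvdn_prime2.
Qed.
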